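(* Let $G$ be a simple graph with $m \ge 4$ edges, and let $\Delta_1 \ge \dots \ge \Delta_m$ and $\psi_1,\dots,\psi_m$ be as defined below. Then for no $k$ with $4 \le k \le m$ does $G$ satisfy both $q(G) < \min\{\psi_i : 1 \le i \le k-1\}$ and $q(G) = \psi_k$.
   Context: $q(G)$ denotes the largest eigenvalue of the signless Laplacian $D + A$ of $G$. For each edge $uv$ of $G$ put $d_u + d_v - 2$, and let $\Delta_1 \ge \dots \ge \Delta_m$ be these numbers in non-increasing order. For $1 \le k \le m$, \[ \psi_k := 1 + \frac{\Delta_k + 1 + \sqrt{(\Delta_k+1)^2 + 4\sum_{i=1}^{k-1}(\Delta_i - \Delta_k)}}{2}. \] It holds that $q(G) \le \psi_k$ for all $k$, with equality iff $\Delta_1 = \Delta_m$ or there exists $2 \le t \le k$ with $m-1 = \Delta_1 = \Delta_{t-1} > \Delta_t = \Delta_m$. *)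

From HB Require Import structures.
From mathcomp Require Import all_boot all_order all_algebra.
Set Implicit Arguments. Unset Strict Implicit. Unset Printing Implicit Defensive.
Import Order.TTheory GRing.Theory Num.Theory.

(* A simple graph on vertex set 'I_n is a symmetric irreflexive relation e. *)

Definition edges (n : nat) (e : rel 'I_n) : {set {set 'I_n}} :=
  [set [set x; y] | x in 'I_n, y in 'I_n & e x y].

Definition nedges (n : nat) (e : rel 'I_n) : nat := #|edges e|.

Definition deg (n : nat) (e : rel 'I_n) (u : 'I_n) : nat := #|[set v | e u v]|.

Definition edge_val (n : nat) (e : rel 'I_n) (s : {set 'I_n}) : nat :=
  (\sum_(u in s) deg e u) - 2.

Definition Deltas (n : nat) (e : rel 'I_n) : seq nat :=
  sort geq [seq edge_val e s | s <- enum (edges e)].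

(* Delta_k, 1-indexed *)
Definition Delta (n : nat) (e : rel 'I_n) (k : nat) : nat := nth 0 (Deltas e) k.-1.

Local Open Scope ring_scope.

Definition psi (R : rcfType) (n : nat) (e : rel 'I_n) (k : nat) : R :=
  let Dk : R := (Delta e k)%:R in
  1 + (Dk + 1 + Num.sqrt ((Dk + 1) ^+ 2
        + 4 * \sum_(1 <= i < k) ((Delta e i)%:R - Dk))) / 2.

Definition adjmx (R : rcfType) (n : nat) (e : rel 'I_n) : 'M[R]_n :=
  \matrix_(i, j) (e i j)%:R.
Definition degmx (R : rcfType) (n : nat) (e : rel 'I_n) : 'M[R]_n :=
  \matrix_(i, j) ((i == j)%:R * (deg e i)%:R).
Definition signlessLap (R : rcfType) (n : nat) (e : rel 'I_n) : 'M[R]_n :=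
  degmx R e + adjmx R e.

Definition is_q (R : rcfType) (n : nat) (e : rel 'I_n) (q : R) : Prop :=
  eigenvalue (signlessLap R e) q /\
  forall a : R, eigenvalue (signlessLap R e) a -> a <= q.

From HB Require Import structures.
From mathcomp Require Import all_boot all_order all_algebra.
From mathcomp Require Import zify ring lra.
Set Implicit Arguments. Unset Strict Implicit. Unset Printing Implicit Defensive.
Import Order.TTheory GRing.Theory Num.Theory.

(* Put K := Δ_k and S := Σ_f (Δ_f - K)^+; then q = ψ_k reads (q - 1)(q - 2 - K) = S.
   The entrywise absolute value x of a q-eigenvector of D + A satisfies
   (D + A) x >= q x, so the edge weights y_{uv} := x_u + x_v satisfy
   A_L y >= (q - 2) y, where A_L is the adjacency matrix of the line graph, in
   which the edge f has degree Δ_f. Weighting by y the row bound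
     Σ_{g ~ f} (Δ_g - K + 1) + Σ_{g ≁ f, g ≠ f} (Δ_g - K)^+ <= K + S
   and comparing with the quadratic equation forces equality everywhere: y is a
   (q - 2)-eigenvector of A_L and every edge with Δ_f > K meets every edge of the
   support of y. As k >= 4 there are three such edges; they meet pairwise, and an
   edge meeting all three of them must pass through their common vertex (a
   triangle admits no such edge). So the support is a clique closed under
   adjacency, which gives q - 2 = Δ_f for every f with Δ_f > K; in particular
   q = Δ_1 + 2 = ψ_1, contradicting q < ψ_1. *)

Section FinSetPairs.
Variable T : finType.
Implicit Types (A B : {set T}) (a b c d x t : T).

Lemma meetP A B : reflect (exists x, x \in A /\ x \in B) (A :&: B != set0).
Proof.
apply: (iffP (set0Pn _)) => [[x]|[x [xA xB]]]; last by exists x; rewrite inE xA.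
by rewrite inE => /andP[xA xB]; exists x.
Qed.

Lemma eq_set2 a b c d : a != b -> [set a; b] = [set c; d] ->
  (a == c) && (b == d) || (a == d) && (b == c).
Proof.
move=> ab eq.
have ha : a \in [set c; d] by rewrite -eq !inE eqxx.
have hb : b \in [set c; d] by rewrite -eq !inE eqxx orbT.
have hc : c \in [set a; b] by rewrite eq !inE eqxx.
have hd : d \in [set a; b] by rewrite eq !inE eqxx orbT.
move: ha hb hc hd; rewrite !inE.
case/orP=> /eqP ?; case/orP=> /eqP ?; subst; rewrite ?eqxx ?orbT //=;
  try by rewrite eqxx in ab.
all: by move=> _ _; rewrite eq_sym andbb orbb; apply: contraNneq ab => ->.
Qed.

Lemma set2_meet_other x t B : x \notin B -> [set x; t] :&: B != set0 -> t \in B.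
Proof.
move=> xB /meetP[y []]; rewrite !inE => /orP[] /eqP -> // yB.
by rewrite yB in xB.
Qed.

Lemma three_distinct A : (3 <= #|A|)%N ->
  exists a b c, [/\ a \in A, b \in A, c \in A & [/\ a != b, a != c & b != c]].
Proof.
move=> h; have /card_gt0P[a aA] : (0 < #|A|)%N by lia.
have /card_gt0P[b] : (0 < #|A :\ a|)%N by move: h; rewrite (cardsD1 a A) aA; lia.
rewrite in_setD1 => /andP[ba bA].
have /card_gt0P[c] : (0 < #|A :\ a :\ b|)%N.
  by move: h; rewrite (cardsD1 a A) aA (cardsD1 b (A :\ a)) in_setD1 ba bA; lia.
rewrite !in_setD1 => /and3P[cb ca cA].
by exists a, b, c; split => //; split; rewrite // eq_sym.
Qed.

End FinSetPairs.

Section LineGraph.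
Variables (n : nat) (e : rel 'I_n).
Hypotheses (esym : symmetric e) (eirr : irreflexive e).
Local Notation E := (edges e).

Lemma edgesP s : reflect (exists u v, e u v /\ s = [set u; v]) (s \in E).
Proof.
apply: (iffP imset2P) => [[u v _]|[u [v [huv ->]]]]; last by exists u v; rewrite ?inE.
by rewrite inE => huv ->; exists u, v.
Qed.

Lemma adj_neq u v : e u v -> u != v.
Proof. by apply: contraTneq => ->; rewrite eirr. Qed.

Lemma deg_gt0 u v : e u v -> (0 < deg e u)%N.
Proof. by move=> huv; apply/card_gt0P; exists v; rewrite inE. Qed.

Lemma edge_set2 A x : A \in E -> x \in A -> exists a, e x a /\ A = [set x; a].
Proof.
case/edgesP=> u [v [huv ->]]; rewrite !inE => /orP[] /eqP ->; first by exists v.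
by exists u; rewrite esym setUC.
Qed.

Lemma edge_eq_set2 A a b : A \in E -> a != b -> a \in A -> b \in A -> A = [set a; b].
Proof.
move=> AE ab aA; case: (edge_set2 AE aA) => t [_ ->].
by rewrite !inE eq_sym (negbTE ab) => /eqP ->.
Qed.

Definition edge_nbhd (f : {set 'I_n}) := [set g in E | (g != f) && (f :&: g != set0)].
Local Notation N := edge_nbhd.

Lemma edge_nbhd_sym f g : f \in E -> g \in E -> (g \in N f) = (f \in N g).
Proof. by move=> fE gE; rewrite !inE fE gE /= eq_sym setIC. Qed.

Lemma edge_nbhd_edges f g : g \in N f -> g \in E.
Proof. by rewrite inE => /andP[]. Qed.

Definition nbhd_but (u v : 'I_n) := [set w | e u w & w != v].

Lemma card_nbhd_but u v : e u v -> #|nbhd_but u v| = (deg e u).-1.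
Proof.
move=> huv; rewrite /deg (cardsD1 v [set w | e u w]) inE huv.
by rewrite add1n /=; apply: eq_card => w; rewrite !inE andbC.
Qed.

Lemma nbhd_but_set2_inj u v : {in nbhd_but u v &, injective (fun w => [set u; w])}.
Proof.
move=> w1 w2; rewrite !inE => /andP[h1 _] _ /eq_set2.
case/(_ (adj_neq h1))/orP => /andP[/eqP a1 /eqP a2] //.
by move: h1; rewrite -a2 eirr.
Qed.

Lemma edge_nbhd_set2 u v : e u v ->
  N [set u; v] = [set [set u; w] | w in nbhd_but u v] :|: [set [set v; w] | w in nbhd_but v u].
Proof.
move=> huv; have uv := adj_neq huv.
apply/setP=> g; apply/idP/idP.
  rewrite inE => /andP[/edgesP[a [b [hab ->]]] /andP[neq /meetP[x [hx1 hx2]]]].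
  rewrite !inE in hx1 hx2; rewrite inE; apply/orP.
  case/orP: hx1 => /eqP ?; case/orP: hx2 => /eqP ?; subst.
  - left; apply/imsetP; exists b => //.
    by rewrite inE hab /=; apply: contra neq => /eqP ->.
  - left; apply/imsetP; exists a; last by rewrite setUC.
    by rewrite inE esym hab /=; apply: contra neq => /eqP ->; rewrite setUC.
  - right; apply/imsetP; exists b => //.
    by rewrite inE hab /=; apply: contra neq => /eqP ->; rewrite setUC.
  - right; apply/imsetP; exists a; last by rewrite setUC.
    by rewrite inE esym hab /=; apply: contra neq => /eqP ->.
have nbhd_of x y w : [set x; y] = [set u; v] -> e x w -> w != y ->
    [set x; w] \in N [set u; v].
  move=> xy hw wy; rewrite inE; apply/and3P; split.
  - by apply/edgesP; exists x, w.
  - rewrite -xy; apply/negP => /eqP /eq_set2.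
    case/(_ (adj_neq hw))/orP => /andP[_ /eqP a2]; first by rewrite a2 eqxx in wy.
    by move: hw; rewrite a2 eirr.
  - by apply/meetP; exists x; rewrite -xy !inE !eqxx.
rewrite inE => /orP[] /imsetP[w]; rewrite inE => /andP[hw wn] ->.
  exact: nbhd_of.
by apply: (nbhd_of v u); rewrite // setUC.
Qed.

Lemma disjoint_nbhd_but u v : e u v ->
  [disjoint [set [set u; w] | w in nbhd_but u v] & [set [set v; w] | w in nbhd_but v u]].
Proof.
move=> huv; rewrite -setI_eq0; apply/eqP/setP => g; rewrite !inE.
apply/negP => /andP[/imsetP[w1 h1 ->] /imsetP[w2 h2 /eq_set2]].
move: h1 h2; rewrite !inE => /andP[h1 n1] /andP[h2 n2].
case/(_ (adj_neq h1))/orP => /andP[/eqP a1 /eqP a2].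
  by move: (adj_neq huv); rewrite a1 eqxx.
by move: n1; rewrite a2 eqxx.
Qed.

Lemma big_edge_nbhd_set2 (R : nmodType) u v (F : {set 'I_n} -> R) : e u v ->
  (\sum_(g in N [set u; v]) F g =
  \sum_(w in nbhd_but u v) F [set u; w] + \sum_(w in nbhd_but v u) F [set v; w])%R.
Proof.
move=> huv; rewrite (edge_nbhd_set2 huv).
rewrite (eq_bigl [predU [set [set u; w] | w in nbhd_but u v] &
                        [set [set v; w] | w in nbhd_but v u]]); last by move=> g; rewrite !inE.
rewrite bigU ?disjoint_nbhd_but // !big_imset //; exact: nbhd_but_set2_inj.
Qed.

Lemma card_edge_nbhd f : f \in E -> #|N f| = edge_val e f.
Proof.
case/edgesP=> u [v [huv ->]].
rewrite -sum1_card (big_edge_nbhd_set2 _ huv) !sum1_card.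
have hvu : e v u by rewrite esym.
rewrite (card_nbhd_but huv) (card_nbhd_but hvu).
rewrite /edge_val big_setU1 ?big_set1 ?inE ?(adj_neq huv) //=.
by have := deg_gt0 huv; have := deg_gt0 hvu; lia.
Qed.

Lemma edges_meet_once A B x y : A \in E -> B \in E -> A != B ->
  x \in A -> x \in B -> y \in A -> y \in B -> x = y.
Proof.
move=> AE BE AB xA xB yA yB; apply/eqP; apply: contraNT AB => xy.
by rewrite (edge_eq_set2 AE xy xA yA) (edge_eq_set2 BE xy xB yB).
Qed.

Lemma edge_nbhd_common_vertex A B C F : F \in E ->
  B \in N A -> C \in N A -> C \in N B -> A \in N F -> B \in N F -> C \in N F ->
  exists x, [/\ x \in A, x \in B, x \in C & x \in F].
Proof.
move=> FE; rewrite !inE => /and3P[BE BA /meetP[x [xA xB]]] /and3P[CE CA mAC] /and3P[_ CB mBC].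
move=> /and3P[AE AF mFA] /and3P[_ BF mFB] /and3P[_ CF mFC].
have [a [_ eA]] := edge_set2 AE xA; have [b [_ eB]] := edge_set2 BE xB.
have ab : a != b by apply: contraNneq BA => ab; rewrite eA eB ab.
have other (X : {set 'I_n}) t : x \notin X -> [set x; t] :&: X != set0 -> t \in X.
  by move=> xX; apply: set2_meet_other.
exists x; case xF: (x \in F); case xC: (x \in C); rewrite ?xA ?xB //; exfalso.
- have [t [_ eF]] := edge_set2 FE xF.
  have aC : a \in C by apply: other; [by rewrite xC | by rewrite -eA // setIC].
  have bC : b \in C by apply: other; [by rewrite xC | by rewrite -eB // setIC].
  have eC := edge_eq_set2 CE ab aC bC.
  have : t \in C by apply: other; [by rewrite xC | by rewrite -eF // setIC].
  by rewrite eC !inE => /orP[] /eqP tab; [move: AF | move: BF];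
    rewrite eF ?eA ?eB tab eqxx.
all: have aF : a \in F by apply: other; [by rewrite xF | by rewrite -eA // setIC].
all: have bF : b \in F by apply: other; [by rewrite xF | by rewrite -eB // setIC].
all: have eF := edge_eq_set2 FE ab aF bF.
- have [c [_ eC]] := edge_set2 CE xC.
  have : c \in F by apply: other; [by rewrite xF | by rewrite -eC // setIC].
  by rewrite eF !inE => /orP[] /eqP cab; [move: CA | move: CB];
    rewrite eC ?eA ?eB cab eqxx.
- have aC : a \in C by apply: other; [by rewrite xC | by rewrite -eA // setIC].
  have bC : b \in C by apply: other; [by rewrite xC | by rewrite -eB // setIC].
  by move: CF; rewrite eF (edge_eq_set2 CE ab aC bC) eqxx.
Qed.

Lemma edge_nbhd_triangle h1 h2 h3 f g : f \in E -> g \in E -> f != g ->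
  h2 \in N h1 -> h3 \in N h1 -> h3 \in N h2 ->
  h1 \in N f -> h2 \in N f -> h3 \in N f ->
  h1 \in N g -> h2 \in N g -> h3 \in N g -> g \in N f.
Proof.
move=> fE gE fg h21 h31 h32 h1f h2f h3f h1g h2g h3g.
have [x [x1 x2 _ xf]] := edge_nbhd_common_vertex fE h21 h31 h32 h1f h2f h3f.
have [y [y1 y2 _ yg]] := edge_nbhd_common_vertex gE h21 h31 h32 h1g h2g h3g.
have h12 : h1 != h2 by move: h21; rewrite inE eq_sym => /and3P[].
have xy := edges_meet_once (edge_nbhd_edges h1f) (edge_nbhd_edges h2f) h12 x1 x2 y1 y2.
rewrite inE gE eq_sym fg; apply/meetP.
by exists x; split => //; rewrite xy.
Qed.

Lemma sum_edge_nbhd_exchange (R : comPzRingType) (phi psi : {set 'I_n} -> R) :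
  (\sum_(f in E) phi f * \sum_(g in N f) psi g =
   \sum_(g in E) psi g * \sum_(f in N g) phi f)%R.
Proof.
have ext (F : {set 'I_n} -> R) f :
    (\sum_(g in N f) F g = \sum_(g in E) if g \in N f then F g else 0)%R.
  rewrite -big_mkcondr; apply: eq_bigl => g.
  by case: (boolP (g \in N f)) => [h|_]; rewrite ?andbF ?andbT // (edge_nbhd_edges h).
under eq_bigr do rewrite ext mulr_sumr.
under [RHS]eq_bigr do rewrite ext mulr_sumr.
rewrite exchange_big /=; apply: eq_bigr => g gE; apply: eq_bigr => f fE.
by rewrite (edge_nbhd_sym fE gE); case: (f \in N g); rewrite ?mulr0 // mulrC.
Qed.

End LineGraph.

Section SortedEdgeValues.
Variables (n : nat) (e : rel 'I_n).
Local Notation E := (edges e).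
Local Notation m := (nedges e).

Lemma size_Deltas : size (Deltas e) = m.
Proof. by rewrite /Deltas size_sort size_map /nedges cardE. Qed.

Lemma perm_Deltas : perm_eq (Deltas e) [seq edge_val e s | s <- enum E].
Proof. by rewrite /Deltas perm_sort. Qed.

Lemma big_edges_Deltas (F : nat -> nat) :
  \sum_(f in E) F (edge_val e f) = \sum_(0 <= j < m) F (nth 0 (Deltas e) j).
Proof.
rewrite -size_Deltas -(big_nth 0 predT F) (perm_big _ perm_Deltas) big_map.
by rewrite big_enum.
Qed.

Lemma Delta_le i j : (1 <= i <= j)%N -> (j <= m)%N -> (Delta e j <= Delta e i)%N.
Proof.
move=> /andP[i1 ij] jm; rewrite /Delta.
have geq_trans : transitive geq by move=> a b c /= h1 h2; exact: leq_trans h2 h1.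
have geq_total : total geq by move=> a b; exact: leq_total.
apply: (sorted_leq_nth geq_trans (fun a => leqnn a) 0 (sort_sorted geq_total _));
  rewrite ?inE -/(Deltas e) ?size_Deltas; lia.
Qed.

Lemma Delta1_edge : (0 < m)%N -> exists2 f, f \in E & edge_val e f = Delta e 1.
Proof.
move=> m0; have : Delta e 1 \in [seq edge_val e s | s <- enum E].
  by rewrite -(perm_mem perm_Deltas) mem_nth // size_Deltas.
by case/mapP=> f; rewrite mem_enum => fE ->; exists f.
Qed.

(* Truncated subtraction makes this the sum of the positive parts (Δ_f - K)^+. *)
Definition excess (K : nat) : nat := \sum_(f in E) (edge_val e f - K).

Lemma excess_gt0 K h : h \in E -> (K < edge_val e h)%N -> (0 < excess K)%N.
Proof. by move=> hE Kh; rewrite /excess (bigD1 h) //= addn_gt0 subn_gt0 Kh. Qed.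

Lemma excess_Delta k : (1 <= k <= m)%N ->
  excess (Delta e k) = \sum_(1 <= i < k) (Delta e i - Delta e k).
Proof.
move=> /andP[k1 km]; rewrite /excess (big_edges_Deltas (subn^~ _)).
rewrite (big_cat_nat _ (n := k.-1)) //=; last by lia.
rewrite [X in (_ + X)%N]big1_seq ?addn0.
  by case: k k1 {km} => // k _; rewrite big_add1.
move=> j; rewrite mem_index_iota => /andP[j1 j2].
by apply/eqP; rewrite subn_eq0; apply: (Delta_le (j := j.+1)); lia.
Qed.

Lemma high_edges_card k : (1 <= k <= m)%N ->
  (forall i, (1 <= i < k)%N -> (Delta e k < Delta e i)%N) ->
  (k.-1 <= #|[set f in E | (Delta e k < edge_val e f)%N]|)%N.
Proof.
move=> /andP[k1 km] high; rewrite -sum1_card.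
rewrite (eq_bigl (fun f => (f \in E) && (Delta e k < edge_val e f)%N)); last first.
  by move=> f; rewrite inE.
rewrite big_mkcondr /= (eq_bigr (fun f => nat_of_bool ((Delta e k < edge_val e f)%N))); last first.
  by move=> f _; case: ifP.
rewrite (big_edges_Deltas (fun x => nat_of_bool (Delta e k < x)%N)).
rewrite (big_cat_nat _ (n := k.-1)) //=; last by lia.
apply: leq_trans (leq_addr _ _).
rewrite (eq_big_nat _ _ (F2 := fun _ => 1%N)) ?sum_nat_const_nat ?muln1 ?subn0 //.
move=> j /andP[_ jk]; have := high j.+1; rewrite /Delta /= => ->; lia.
Qed.

Local Open Scope ring_scope.

Definition psi_level (R : rcfType) (K : nat) : R :=
  1 + (K%:R + 1 + Num.sqrt ((K%:R + 1) ^+ 2 + 4 * (excess K)%:R)) / 2.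

Lemma psiE (R : rcfType) k : (1 <= k <= m)%N -> psi R e k = psi_level R (Delta e k).
Proof.
move=> hk; suff sumE : \sum_(1 <= i < k) ((Delta e i)%:R - (Delta e k)%:R : R) =
    (excess (Delta e k))%:R by rewrite /psi /psi_level sumE.
rewrite (excess_Delta hk) natr_sum; apply: eq_big_nat => i /andP[i1 ik].
by rewrite natrB //; apply: Delta_le; lia.
Qed.

Lemma psi1 (R : rcfType) : psi R e 1 = (Delta e 1)%:R + 2.
Proof.
rewrite /psi big_geq // mulr0 addr0 sqrtr_sqr ger0_norm ?addr_ge0 //.
have two_neq0 : (2 : R) != 0 by rewrite pnatr_eq0.
by field.
Qed.

Lemma psi_level_quadratic (R : rcfType) K (p : R) : p = psi_level R K ->
  1 < p /\ (p - 1) * (p - 2 - K%:R) = (excess K)%:R.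
Proof.
move=> ->; rewrite /psi_level.
set a : R := K%:R + 1; set S : R := (excess K)%:R.
have a0 : 0 < a by rewrite ltr_wpDl ?ler0n.
have S0 : 0 <= S := ler0n R _.
have r0 := sqrtr_ge0 (a ^+ 2 + 4 * S).
have r2 : Num.sqrt (a ^+ 2 + 4 * S) ^+ 2 = a ^+ 2 + 4 * S.
  by rewrite sqr_sqrtr // addr_ge0 ?sqr_ge0 // mulr_ge0.
split; first by lra.
have -> : K%:R = a - 1 by rewrite /a; ring.
set r := Num.sqrt _ in r0 r2 *.
have two_neq0 : (2 : R) != 0 by rewrite pnatr_eq0.
have four_neq0 : (4 : R) != 0 by rewrite pnatr_eq0.
have -> : S = (r ^+ 2 - a ^+ 2) / 4 by rewrite r2; field.
by field.
Qed.

End SortedEdgeValues.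

Local Open Scope ring_scope.

Section EdgeWeights.
Variables (R : rcfType) (n : nat) (e : rel 'I_n).
Hypotheses (esym : symmetric e) (eirr : irreflexive e).
Variables (X : 'I_n -> R) (q : R).
Hypothesis X_ge0 : forall u, 0 <= X u.
Hypothesis X_subinv : forall u,
  q * X u <= (deg e u)%:R * X u + \sum_(w in [set w | e u w]) X w.
Local Notation E := (edges e).
Local Notation N := (edge_nbhd e).
Local Notation ev f := ((edge_val e f)%:R : R).

Definition edge_weight (f : {set 'I_n}) := \sum_(x in f) X x.
Local Notation y := edge_weight.
Definition nbhd_weight f := \sum_(g in N f) y g.

Lemma edge_weight_ge0 f : 0 <= y f.
Proof. exact: sumr_ge0. Qed.

Lemma edge_weight_set2 u v : u != v -> y [set u; v] = X u + X v.
Proof. by move=> uv; rewrite /y big_setU1 ?big_set1 // inE. Qed.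

Lemma sum_nbhd_but_weight u v : e u v -> \sum_(w in nbhd_but e u v) y [set u; w] =
  ((deg e u)%:R - 1) * X u + (\sum_(w in [set w | e u w]) X w - X v).
Proof.
move=> huv; rewrite (eq_bigr (fun w => X u + X w)); last first.
  by move=> w; rewrite inE => /andP[h _]; rewrite edge_weight_set2 // (adj_neq eirr h).
rewrite big_split /= sumr_const (card_nbhd_but huv) [in RHS](bigD1 v) ?inE //=.
rewrite [in RHS](eq_bigl (mem (nbhd_but e u v))); last by move=> w; rewrite !inE.
have := deg_gt0 huv; case: (deg e u) => // d _ /=.
by rewrite -mulr_natl -natr1; ring.
Qed.

Lemma nbhd_weight_ge f : f \in E -> (q - 2) * y f <= nbhd_weight f.
Proof.
case/edgesP=> u [v [huv ->]]; have hvu : e v u by rewrite esym.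
rewrite /nbhd_weight (big_edge_nbhd_set2 esym eirr _ huv).
rewrite (sum_nbhd_but_weight huv) (sum_nbhd_but_weight hvu) edge_weight_set2 ?(adj_neq eirr huv) //.
by have := X_subinv u; have := X_subinv v; lra.
Qed.

Lemma sum_nbhd_weight : \sum_(f in E) nbhd_weight f = \sum_(f in E) ev f * y f.
Proof.
have := sum_edge_nbhd_exchange e (fun _ => 1) y.
under eq_bigr do rewrite mul1r; move=> ->; apply: eq_bigr => f fE.
by rewrite sumr_const card_edge_nbhd // mulrC.
Qed.

Variable K : nat.
Local Notation S := ((excess e K)%:R : R).

Definition excess_at f : R := (edge_val e f - K)%N%:R.
Definition far_excess g : R := \sum_(f in (E :\: N g) :\ g) excess_at f.
Definition nbhd_level g : R := \sum_(f in N g) (ev f - (K%:R - 1)).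

Lemma far_excess_ge0 g : 0 <= far_excess g.
Proof. exact: sumr_ge0. Qed.

Lemma excess_atE : S = \sum_(f in E) excess_at f.
Proof. exact: natr_sum. Qed.

Lemma nbhd_level_far_excess g : g \in E -> nbhd_level g + far_excess g <= K%:R + S.
Proof.
move=> gE.
have ->: nbhd_level g = \sum_(f in N g) (ev f - K%:R) + ev g.
  rewrite -(card_edge_nbhd esym eirr gE) -sumr_const -big_split /=.
  by apply: eq_bigr => f _; ring.
have -> : S = \sum_(f in N g) excess_at f + (excess_at g + far_excess g).
  rewrite excess_atE (big_setID (N g)) /= (setIidPr _); last first.
    by apply/subsetP => f; exact: edge_nbhd_edges.
  by rewrite [X in _ + X = _](big_setD1 g) // !inE gE eqxx andbT andbF.
have hN : \sum_(f in N g) (ev f - K%:R) <= \sum_(f in N g) excess_at f.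
  apply: ler_sum => f _; rewrite /excess_at; case: (leqP K (edge_val e f)) => h.
    by rewrite (natrB _ h).
  have : ev f <= K%:R :> R by rewrite ler_nat ltnW.
  have := ler0n R (edge_val e f - K); lra.
have hg : ev g <= K%:R + excess_at g by rewrite -natrD ler_nat; lia.
lra.
Qed.

Hypothesis q_gt1 : 1 < q.
Hypothesis excess_gt0 : (0 < excess e K)%N.
Hypothesis q_quadratic : (q - 1) * (q - 2 - K%:R) = S.

Lemma level_lt_q : K%:R < q - 2.
Proof.
rewrite -subr_gt0 -(pmulr_rgt0 _ (_ : 0 < q - 1)) ?subr_gt0 // q_quadratic.
by rewrite ltr0n.
Qed.

Definition defect g := nbhd_weight g - (q - 2) * y g.

(* The four summands are nonnegative (balance_terms_ge0) while the quadratic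
   equation for q makes their total over all edges vanish (sum_balance). *)
Definition balance g := y g * (K%:R + S - nbhd_level g - far_excess g) +
  y g * far_excess g + (q - 1 - K%:R) * defect g + ev g * defect g.

Lemma balance_terms_ge0 g : g \in E -> [/\ 0 <= y g * (K%:R + S - nbhd_level g - far_excess g),
  0 <= y g * far_excess g, 0 <= (q - 1 - K%:R) * defect g & 0 <= ev g * defect g].
Proof.
move=> gE; have := nbhd_level_far_excess gE; have := level_lt_q.
have := far_excess_ge0 g; have := edge_weight_ge0 g.
have : 0 <= defect g by rewrite subr_ge0 nbhd_weight_ge.
by split; apply: mulr_ge0; rewrite ?ler0n //; lra.
Qed.

Lemma sum_balance : \sum_(g in E) balance g = 0.
Proof.
have heq : (q - 2) ^+ 2 - (K%:R - 1) * (q - 2) = K%:R + S by rewrite -q_quadratic; ring.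
have levels : \sum_(g in E) y g * nbhd_level g =
    \sum_(f in E) ev f * nbhd_weight f - (K%:R - 1) * \sum_(f in E) nbhd_weight f.
  rewrite -(sum_edge_nbhd_exchange e (fun f => ev f - (K%:R - 1)) y) mulr_sumr -sumrB.
  by apply: eq_bigr => f _; rewrite /nbhd_weight; ring.
rewrite (eq_bigr (fun g => (K%:R + S) * y g - y g * nbhd_level g +
    (q - 1 - K%:R) * nbhd_weight g - (q - 1 - K%:R) * (q - 2) * y g +
    ev g * nbhd_weight g - (q - 2) * (ev g * y g))); last first.
  by move=> g _; rewrite /balance /defect; ring.
rewrite !(sumrB, big_split) /= -!mulr_sumr levels sum_nbhd_weight -!mulrA -heq.
ring.
Qed.

Lemma balance_eq0 g : g \in E -> balance g = 0.
Proof.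
apply: (psumr_eq0P _ sum_balance) => {}g gE.
by case: (balance_terms_ge0 gE) => *; rewrite /balance; lra.
Qed.

Lemma nbhd_weight_eq g : g \in E -> nbhd_weight g = (q - 2) * y g.
Proof.
move=> gE; have := balance_eq0 gE; case: (balance_terms_ge0 gE); rewrite /balance.
move=> *; have /eqP : (q - 1 - K%:R) * defect g = 0 by lra.
have := level_lt_q; rewrite mulf_eq0 /defect => ? /orP[] /eqP; lra.
Qed.

Lemma far_excess_eq0 g : g \in E -> 0 < y g -> far_excess g = 0.
Proof.
move=> gE yg; have := balance_eq0 gE; case: (balance_terms_ge0 gE); rewrite /balance.
move=> *; have /eqP : y g * far_excess g = 0 by lra.
by rewrite mulf_eq0 => /orP[] /eqP //; lra.
Qed.

Hypothesis X_pos : exists u, 0 < X u.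

Definition support := [set f in E | 0 < y f].

Lemma supportP f : reflect (f \in E /\ 0 < y f) (f \in support).
Proof. by rewrite inE; apply: andP. Qed.

Lemma support_neq0 : exists f, f \in support.
Proof.
have [u Xu] := X_pos.
have [w huw] : exists w, e u w.
  apply/existsP; apply: contraTT Xu => /existsPn noadj.
  have nbhd0 : [set w | e u w] = set0.
    by apply/setP => w; rewrite !inE (negbTE (noadj w)).
  by have := X_subinv u; rewrite /deg nbhd0 cards0 big_set0 mul0r addr0 -leNgt pmulr_rle0 // (lt_trans ltr01 q_gt1).
exists [set u; w]; apply/supportP; split; first by apply/edgesP; exists u, w.
by rewrite edge_weight_set2 ?(adj_neq eirr huw) // ltr_wpDr.
Qed.

Lemma edge_nbhd_support g f : g \in support -> f \in N g -> f \in support.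
Proof.
move=> /supportP[gE yg] fN; have fE := edge_nbhd_edges fN.
have : y g <= nbhd_weight f.
  rewrite /nbhd_weight (big_setD1 g) /=; last by rewrite (edge_nbhd_sym fE gE).
  have : 0 <= \sum_(i in N f :\ g) y i by apply: sumr_ge0 => i _; exact: edge_weight_ge0.
  lra.
rewrite nbhd_weight_eq // => ygf; apply/supportP; split => //.
have l0 : 0 < q - 2 by apply: le_lt_trans level_lt_q.
by rewrite -(pmulr_rgt0 _ l0); lra.
Qed.

Lemma high_edge_nbhd g h : g \in support -> h \in E -> h != g ->
  (K < edge_val e h)%N -> h \in N g.
Proof.
move=> /supportP[gE yg] hE hg Kh; apply: contraT => hN.
have := far_excess_eq0 gE yg; rewrite /far_excess (big_setD1 h) /=; last first.
  by rewrite in_setD1 in_setD hg hN hE.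
have : 0 < excess_at h by rewrite ltr0n subn_gt0.
have : 0 <= \sum_(i in (E :\: N g) :\ g :\ h) excess_at i by exact: sumr_ge0.
lra.
Qed.

Lemma high_support h : h \in E -> (K < edge_val e h)%N -> h \in support.
Proof.
move=> hE Kh; have [g gP] := support_neq0; have [-> //|hg] := eqVneq h g.
exact: edge_nbhd_support gP (high_edge_nbhd gP hE hg Kh).
Qed.

Variables h1 h2 h3 : {set 'I_n}.
Hypotheses (h1E : h1 \in E) (h2E : h2 \in E) (h3E : h3 \in E).
Hypotheses (Kh1 : (K < edge_val e h1)%N) (Kh2 : (K < edge_val e h2)%N)
  (Kh3 : (K < edge_val e h3)%N).
Hypotheses (h12 : h1 != h2) (h13 : h1 != h3) (h23 : h2 != h3).

Lemma support_clique f g : f \in support -> g \in support -> f != g -> g \in N f.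
Proof.
move=> fP gP fg; have /supportP[gE _] := gP; have /supportP[fE _] := fP.
have [Kg|Kg] := ltnP K (edge_val e g).
  by rewrite (high_edge_nbhd fP gE) // eq_sym.
have [Kf|Kf] := ltnP K (edge_val e f).
  by rewrite (edge_nbhd_sym fE gE) (high_edge_nbhd gP fE).
have high_neq h x : (K < edge_val e h)%N -> (edge_val e x <= K)%N -> h != x.
  by move=> Kh Kx; apply: contraTneq Kh => ->; rewrite -leqNgt.
apply: (edge_nbhd_triangle esym (h1 := h1) (h2 := h2) (h3 := h3)) => //;
  apply: high_edge_nbhd => //;
  first [by rewrite high_support | by rewrite eq_sym | exact: high_neq].
Qed.

Lemma edge_nbhd_supportE f : f \in support -> N f = support :\ f.
Proof.
move=> fP; apply/setP => g; rewrite in_setD1; apply/idP/idP.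
  move=> gN; rewrite (edge_nbhd_support fP gN) andbT.
  by move: gN; rewrite !inE => /and3P[_ ->].
by move=> /andP[gf gP]; apply: support_clique; rewrite // eq_sym.
Qed.

Lemma card_support : (#|support|)%:R = q - 1.
Proof.
have [f0 f0P] := support_neq0; pose Y := \sum_(f in support) y f.
have weight_eq f : f \in support -> (q - 1) * y f = Y.
  move=> fP; have /supportP[fE _] := fP.
  move: (nbhd_weight_eq fE); rewrite /nbhd_weight (edge_nbhd_supportE fP).
  by rewrite /Y (big_setD1 f fP) /= => ->; ring.
have Y0 : 0 < Y.
  rewrite /Y (big_setD1 f0 f0P) /=; have /supportP[_ y0] := f0P.
  have : 0 <= \sum_(i in support :\ f0) y i by apply: sumr_ge0 => i _; exact: edge_weight_ge0.
  lra.
suff : (q - 1) * Y = (#|support|)%:R * Y by move/(mulIf (lt0r_neq0 Y0)).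
by rewrite {1}/Y mulr_sumr (eq_bigr (fun _ => Y)) ?sumr_const ?mulr_natl.
Qed.

Lemma high_edge_val h : h \in E -> (K < edge_val e h)%N -> ev h = q - 2.
Proof.
move=> hE Kh; have hP := high_support hE Kh.
rewrite -(card_edge_nbhd esym eirr hE) (edge_nbhd_supportE hP).
by move: card_support; rewrite (cardsD1 h) hP add1n -natr1; lra.
Qed.

End EdgeWeights.

Lemma signlessLap_eigenrow (R : rcfType) n (e : rel 'I_n) (v : 'rV[R]_n) q :
  symmetric e -> v *m signlessLap R e = q *: v -> forall u,
  q * v ord0 u = (deg e u)%:R * v ord0 u + \sum_(w in [set w | e u w]) v ord0 w.
Proof.
move=> esym hv u; have := congr1 (fun M : 'M_(1, n) => M ord0 u) hv; rewrite !mxE => <-.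
under eq_bigr do rewrite !mxE mulrDr.
rewrite big_split /= (bigD1 u) //= eqxx mul1r big1 ?addr0; last first.
  by move=> i /negbTE ->; rewrite mul0r mulr0.
rewrite mulrC; congr (_ + _); rewrite [RHS]big_mkcond /=; apply: eq_bigr => i _.
by rewrite inE esym; case: (e u i); rewrite ?mulr1 ?mulr0.
Qed.

Lemma signlessLap_subinvariant (R : rcfType) n (e : rel 'I_n) (q : R) :
  symmetric e -> 0 <= q -> eigenvalue (signlessLap R e) q ->
  exists X : 'I_n -> R, [/\ forall u, 0 <= X u, exists u, 0 < X u &
    forall u, q * X u <= (deg e u)%:R * X u + \sum_(w in [set w | e u w]) X w].
Proof.
move=> esym q0 /eigenvalueP[v hv v0]; exists (fun u => `|v ord0 u|); split => //.
  apply/existsP; apply: contraNT v0 => /existsPn v_eq0; apply/eqP/rowP => u.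
  by rewrite mxE; apply/eqP; rewrite -normr_eq0 eq_le normr_ge0 andbT leNgt v_eq0.
move=> u; rewrite -{1}(ger0_norm q0) -normrM (signlessLap_eigenrow esym hv).
apply: le_trans (ler_normD _ _) _.
by rewrite normrM ger0_norm ?ler0n // lerD // ler_norm_sum.
Qed.

Unset Implicit Arguments.

Theorem mainTheorem3 (R : rcfType) (n : nat) (e : rel 'I_n)
  (esym : symmetric e) (eirr : irreflexive e)
  (hm : (4 <= nedges e)%N) (q : R) (hq : @is_q R n e q) (k : nat)
  (hk : (4 <= k <= nedges e)%N) :
  ~ ((forall i : nat, (1 <= i <= k.-1)%N -> q < @psi R n e i) /\ q = @psi R n e k).
Proof.
case=> psi_gt q_psi; have k_range : (1 <= k <= nedges e)%N by lia.
set K := Delta e k.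
(* ψ_i depends only on Δ_i, so Δ_i = Δ_k would force ψ_i = q. *)
have high i : (1 <= i < k)%N -> (K < Delta e i)%N.
  move=> ik; have i_range : (1 <= i <= nedges e)%N by lia.
  rewrite ltn_neqAle Delta_le ?andbT; try lia.
  apply: contraTneq (psi_gt i _) => [KDi|]; last by lia.
  by rewrite (psiE _ i_range) -KDi -(psiE _ k_range) -q_psi ltxx.
have /three_distinct[h1 [h2 [h3 [h1H h2H h3H [h12 h13 h23]]]]] :
    (3 <= #|[set f in edges e | K < edge_val e f]|)%N.
  by apply: leq_trans (high_edges_card k_range high); lia.
move: h1H h2H h3H; rewrite !inE => /andP[h1E Kh1] /andP[h2E Kh2] /andP[h3E Kh3].
have [q_gt1 q_quadratic] := psi_level_quadratic (etrans q_psi (psiE _ k_range)).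
have [X [X_ge0 X_pos X_subinv]] := signlessLap_subinvariant esym (ltW (lt_trans ltr01 q_gt1)) hq.1.
have [f1 f1E f1_Delta1] := Delta1_edge (leq_trans (isT : 0 < 4)%N hm).
have Kf1 : (K < edge_val e f1)%N by rewrite f1_Delta1 high //; lia.
have := high_edge_val esym eirr X_ge0 X_subinv q_gt1 (excess_gt0 h1E Kh1) q_quadratic X_pos
  h1E h2E h3E Kh1 Kh2 Kh3 h12 h13 h23 f1E Kf1.
rewrite f1_Delta1 => Delta1_q.
have : q < psi R e 1 by apply: psi_gt; lia.
by rewrite psi1 Delta1_q subrK ltxx.
Qed.
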